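(* The map $n:\mathbb{T}\to\mathbb{N}$ defined below is a bijection.
   Context: Let $\mathbb{T}$ be the set of finite terms defined inductively by: the constant $e\in\mathbb{T}$; and if $X\in\mathbb{T}$ and $Xs=[X_1,\dots,X_k]$ ($k\ge 0$) is a finite list of elements of $\mathbb{T}$, then $v(X,Xs)\in\mathbb{T}$ and $w(X,Xs)\in\mathbb{T}$. Write $[\,]$ for the empty list and $[Y|Xs]$ for the list with first element $Y$ followed by the list $Xs$. Define $n:\mathbb{T}\to\mathbb{N}$ recursively by: $n(e)=0$; $n(v(X,[\,]))=2^{n(X)+1}-1$; $n(v(X,[Y|Xs]))=(n(w(Y,Xs))+1)\,2^{n(X)+1}-1$; $n(w(X,[\,]))=2^{n(X)+2}-2$; $n(w(X,[Y|Xs]))=(n(v(Y,Xs))+2)\,2^{n(X)+1}-2$. *)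

From mathcomp Require Import ssreflect ssrfun.
From Stdlib Require Import List Arith.
Import ListNotations.
Open Scope nat_scope.

Inductive term : Type :=
| e : term
| v : term -> list term -> term
| w : term -> list term -> term.

(* n : T -> N, defined by the five recursive equations of the paper.
   Locally, g true a Xs = n(v(X,Xs)) and g false a Xs = n(w(X,Xs)),
   where a = n(X) (the tag selects the constructor v / w). *)
Fixpoint n (t : term) : nat :=
  let g := fix g (isv : bool) (a : nat) (l : list term) {struct l} : nat :=
    match l with
    | [] => if isv then Nat.pow 2 (a + 1) - 1 else Nat.pow 2 (a + 2) - 2
    | y :: ys =>
        if isv then (g false (n y) ys + 1) * Nat.pow 2 (a + 1) - 1
        else (g true (n y) ys + 2) * Nat.pow 2 (a + 1) - 2
    end in
  match t with
  | e => 0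
  | v x xs => g true (n x) xs
  | w x xs => g false (n x) xs
  end.

Lemma n_e : n e = 0. Proof. reflexivity. Qed.
Lemma n_v_nil X : n (v X []) = Nat.pow 2 (n X + 1) - 1. Proof. reflexivity. Qed.
Lemma n_v_cons X Y Xs :
  n (v X (Y :: Xs)) = (n (w Y Xs) + 1) * Nat.pow 2 (n X + 1) - 1.
Proof. reflexivity. Qed.
Lemma n_w_nil X : n (w X []) = Nat.pow 2 (n X + 2) - 2. Proof. reflexivity. Qed.
Lemma n_w_cons X Y Xs :
  n (w X (Y :: Xs)) = (n (v Y Xs) + 2) * Nat.pow 2 (n X + 1) - 2.
Proof. reflexivity. Qed.

(* Every positive integer is uniquely o * 2^p with o odd.  The defining
   equations say  n(v X Xs) + 1 = (m + 1) 2^(n X + 1)  and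
   n(w X Xs) + 2 = (m + 2) 2^(n X + 1), where m is the value of the term
   obtained from Xs by applying the other constructor (or e if Xs is empty).
   Hence v-terms take exactly the odd values and w-terms exactly the positive
   even values, and the 2-adic decomposition of the value recovers n X and m;
   both are smaller than the value, so strong induction on it gives
   injectivity and surjectivity. *)

From mathcomp Require Import ssreflect ssrfun.
From Stdlib Require Import Arith Lia List Wf_nat.
Import ListNotations.

Lemma odd_mul_pow2_inj p q o o' :
  Nat.Odd o -> Nat.Odd o' -> o * 2 ^ p = o' * 2 ^ q -> p = q /\ o = o'.
Proof.
  elim: p q => [|p IH] [|q] Ho Ho'; rewrite ?Nat.pow_succ_r' /= => E.
  - lia.
  - by case: (Nat.Even_Odd_False o); [exists (o' * 2 ^ q); lia|].
  - by case: (Nat.Even_Odd_False o'); [exists (o * 2 ^ p); lia|].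
  - by case: (IH q Ho Ho') => [|-> ->]; first lia.
Qed.

Lemma pow2_odd_decomp M :
  0 < M -> {p : nat & {o : nat | Nat.Odd o /\ M = o * 2 ^ p}}.
Proof.
  elim/lt_wf_rect: M => M IH M0.
  case: (Nat.Even_Odd_dec M) => [Mev|Modd]; last by exists 0, M; split => //=; lia.
  have M2 := Nat.Even_double _ Mev; rewrite /Nat.double in M2.
  have [p [o [Oo Eo]]] := IH (Nat.div2 M) ltac:(lia) ltac:(lia).
  by exists (S p), o; split => //; rewrite Nat.pow_succ_r'; lia.
Qed.

Lemma add_eq_mul_pow2_lt c m a N :
  0 < c -> N + c = (m + c) * 2 ^ (a + 1) -> a < N /\ m < N.
Proof.
  have := Nat.pow_gt_lin_r 2 (a + 1) ltac:(lia).
  have := Nat.pow_succ_r' 2 a; rewrite -Nat.add_1_r; nia.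
Qed.

Lemma v_shape_inj a a' m m' : Nat.Even m -> Nat.Even m' ->
  (m + 1) * 2 ^ (a + 1) = (m' + 1) * 2 ^ (a' + 1) -> a = a' /\ m = m'.
Proof.
  move=> [k ->] [k' ->] E.
  have [] := odd_mul_pow2_inj _ _ _ _ (ex_intro _ k erefl) (ex_intro _ k' erefl) E.
  lia.
Qed.

Lemma w_shape_inj a a' m m' : m = 0 \/ Nat.Odd m -> m' = 0 \/ Nat.Odd m' ->
  (m + 2) * 2 ^ (a + 1) = (m' + 2) * 2 ^ (a' + 1) -> a = a' /\ m = m'.
Proof.
  have odd1 : Nat.Odd 1 by exists 0.
  have odd_add2 k : Nat.Odd k -> Nat.Odd (k + 2) by case=> j ->; exists (j + 1); lia.
  (* For m = 0 the odd part of (m + 2) 2^(a + 1) is 1, not m + 2. *)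
  have pow_top b : (0 + 2) * 2 ^ (b + 1) = 1 * 2 ^ (b + 2).
    by rewrite (Nat.add_succ_r b 1) Nat.pow_succ_r'; lia.
  case=> [->|Hm]; case=> [->|Hm']; rewrite ?pow_top => E.
  - by have [] := odd_mul_pow2_inj _ _ _ _ odd1 odd1 E; lia.
  - by have [] := odd_mul_pow2_inj _ _ _ _ odd1 (odd_add2 _ Hm') E; lia.
  - by have [] := odd_mul_pow2_inj _ _ _ _ (odd_add2 _ Hm) odd1 E; lia.
  - by have [] := odd_mul_pow2_inj _ _ _ _ (odd_add2 _ Hm) (odd_add2 _ Hm') E; lia.
Qed.

Lemma odd_v_shape N : Nat.Odd N ->
  {a & {m | Nat.Even m /\ N + 1 = (m + 1) * 2 ^ (a + 1)}}.
Proof.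
  move=> Nodd; have [[|a] [o [Oo E]]] := pow2_odd_decomp (N + 1) ltac:(lia).
  - by exfalso; case: Nodd Oo => [j ?] [k ?]; rewrite /= in E; lia.
  - exists a, (o - 1); rewrite (Nat.add_1_r a).
    by case: Oo => k Ok; split; [exists k|]; nia.
Qed.

Lemma even_w_shape N : Nat.Even N -> 0 < N ->
  {a & {m | (m = 0 \/ Nat.Odd m) /\ N + 2 = (m + 2) * 2 ^ (a + 1)}}.
Proof.
  move=> Nev N0; have [[|p] [o [Oo E]]] := pow2_odd_decomp (N + 2) ltac:(lia).
    by exfalso; case: Nev Oo => [j ?] [k ?]; rewrite /= in E; lia.
  case: (Nat.eq_dec o 1) => [o1|o_ne1].
  - case: p E => [|a] E; first by exfalso; rewrite /= in E; lia.
    exists a, 0; rewrite (Nat.add_1_r a) !Nat.pow_succ_r' in E *.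
    by split; [left|lia].
  - exists p, (o - 2); rewrite (Nat.add_1_r p).
    by case: Oo => k Ok; split; [right; exists (k - 1)|]; nia.
Qed.

(* Taking e for the empty list merges the two defining equations for v (and
   for w) into one, since n e = 0. *)
Definition tail_v (xs : list term) : term := if xs is y :: ys then w y ys else e.
Definition tail_w (xs : list term) : term := if xs is y :: ys then v y ys else e.

Lemma tail_v_inj : injective tail_v.
Proof. by case=> [|y ys] [|y' ys'] //= [-> ->]. Qed.

Lemma tail_w_inj : injective tail_w.
Proof. by case=> [|y ys] [|y' ys'] //= [-> ->]. Qed.

Lemma n_v_tail x xs : n (v x xs) + 1 = (n (tail_v xs) + 1) * 2 ^ (n x + 1).
Proof.
  have := Nat.pow_nonzero 2 (n x + 1) ltac:(lia).
  by case: xs => [|y ys]; rewrite ?n_v_nil ?n_v_cons /=; nia.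
Qed.

Lemma n_w_tail x xs : n (w x xs) + 2 = (n (tail_w xs) + 2) * 2 ^ (n x + 1).
Proof.
  have := Nat.pow_nonzero 2 (n x + 1) ltac:(lia).
  case: xs => [|y ys]; rewrite ?n_w_nil ?n_w_cons /=; last nia.
  by rewrite (Nat.add_succ_r (n x) 1) Nat.pow_succ_r'; lia.
Qed.

Lemma n_v_odd x xs : Nat.Odd (n (v x xs)).
Proof.
  have := n_v_tail x xs; have := Nat.pow_nonzero 2 (n x) ltac:(lia).
  rewrite (Nat.add_1_r (n x)) Nat.pow_succ_r' => ? ?.
  by exists ((n (tail_v xs) + 1) * 2 ^ n x - 1); nia.
Qed.

Lemma n_w_even x xs : Nat.Even (n (w x xs)) /\ 0 < n (w x xs).
Proof.
  have := n_w_tail x xs; have := Nat.pow_nonzero 2 (n x) ltac:(lia).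
  rewrite (Nat.add_1_r (n x)) Nat.pow_succ_r' => ? ?.
  by split; [exists ((n (tail_w xs) + 2) * 2 ^ n x - 1)|]; nia.
Qed.

Lemma n_tail_v_even xs : Nat.Even (n (tail_v xs)).
Proof. by case: xs => [|y ys]; [exists 0 | case: (n_w_even y ys)]. Qed.

Lemma n_tail_w_zero_or_odd xs : n (tail_w xs) = 0 \/ Nat.Odd (n (tail_w xs)).
Proof. by case: xs => [|y ys]; [left | right; apply: n_v_odd]. Qed.

Lemma tail_v_surj t : Nat.Even (n t) -> {xs | tail_v xs = t}.
Proof.
  case: t => [|y ys|y ys] Ev; [by exists [] | exfalso | by exists (y :: ys)].
  exact: Nat.Even_Odd_False Ev (n_v_odd y ys).
Qed.

Lemma tail_w_surj t : n t = 0 \/ Nat.Odd (n t) -> {xs | tail_w xs = t}.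
Proof.
  case: t => [|y ys|y ys] Ht; [by exists [] | by exists (y :: ys) | exfalso].
  have [Ev pos] := n_w_even y ys.
  by case: Ht => [|Od]; [lia | exact: Nat.Even_Odd_False Ev Od].
Qed.

Lemma n_inj : injective n.
Proof.
  suff inj_at N t t' : n t = N -> n t' = N -> t = t'.
    by move=> t t' E; apply: (inj_at (n t)).
  elim/lt_wf_ind: N t t' => N IH.
  case=> [|x xs|x xs] [|x' xs'|x' xs'] Ht Ht'; rewrite ?n_e in Ht Ht'.
  - by [].
  - by case: (n_v_odd x' xs'); lia.
  - by case: (n_w_even x' xs'); lia.
  - by case: (n_v_odd x xs); lia.
  - have [Hx Htail] : n x = n x' /\ n (tail_v xs) = n (tail_v xs').
      apply: (v_shape_inj _ _ _ _ (n_tail_v_even xs) (n_tail_v_even xs')).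
      by rewrite -!n_v_tail Ht Ht'.
    have [lt_x lt_tail] := add_eq_mul_pow2_lt 1 _ _ _ ltac:(lia) (n_v_tail x xs).
    rewrite Ht in lt_x lt_tail.
    rewrite (IH _ lt_x x x' erefl (esym Hx)); congr v.
    by apply: tail_v_inj; apply: (IH _ lt_tail) (esym Htail).
  - by case: (n_v_odd x xs) (n_w_even x' xs') => k ? [[k' ?] _]; lia.
  - by case: (n_w_even x xs); lia.
  - by case: (n_v_odd x' xs') (n_w_even x xs) => k ? [[k' ?] _]; lia.
  - have [Hx Htail] : n x = n x' /\ n (tail_w xs) = n (tail_w xs').
      apply: (w_shape_inj _ _ _ _ (n_tail_w_zero_or_odd xs) (n_tail_w_zero_or_odd xs')).
      by rewrite -!n_w_tail Ht Ht'.
    have [lt_x lt_tail] := add_eq_mul_pow2_lt 2 _ _ _ ltac:(lia) (n_w_tail x xs).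
    rewrite Ht in lt_x lt_tail.
    rewrite (IH _ lt_x x x' erefl (esym Hx)); congr w.
    by apply: tail_w_inj; apply: (IH _ lt_tail) (esym Htail).
Qed.

Lemma n_surj N : {t | n t = N}.
Proof.
  elim/lt_wf_rect: N => N IH.
  case: (Nat.eq_dec N 0) => [->|N0]; first by exists e.
  case: (Nat.Even_Odd_dec N) => [Nev|Nodd].
  - have [a [m [Hm E]]] := even_w_shape N Nev ltac:(lia).
    have [lt_a lt_m] := add_eq_mul_pow2_lt 2 m a N ltac:(lia) E.
    have [x Hx] := IH a lt_a; have [t Ht] := IH m lt_m; subst a m.
    have [xs Hxs] := tail_w_surj t Hm; subst t.
    by exists (w x xs); have := n_w_tail x xs; lia.
  - have [a [m [Hm E]]] := odd_v_shape N Nodd.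
    have [lt_a lt_m] := add_eq_mul_pow2_lt 1 m a N ltac:(lia) E.
    have [x Hx] := IH a lt_a; have [t Ht] := IH m lt_m; subst a m.
    have [xs Hxs] := tail_v_surj t Hm; subst t.
    by exists (v x xs); have := n_v_tail x xs; lia.
Qed.

Theorem proposition2 : bijective n.
Proof.
  exists (fun N => proj1_sig (n_surj N)) => [t|N]; last exact: proj2_sig (n_surj N).
  by apply: n_inj; exact: proj2_sig (n_surj (n t)).
Qed.
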